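(* For every integer $k\ge 2$, $\Gamma_{\times k,t}(K_{k+1}\,\Box\,K_{k+1})=k(k+1)$.
   Context: A set $S\subseteq V(G)$ is a $k$-tuple total dominating set ($k$TDS) of a graph $G$ with $\delta(G)\ge k$ if $|N_G(x)\cap S|\ge k$ for every $x\in V(G)$. The upper $k$-tuple total domination number $\Gamma_{\times k,t}(G)$ is the maximum cardinality of a minimal (with respect to inclusion) $k$TDS of $G$. The Cartesian product $G\,\Box\,H$ has vertex set $V(G)\times V(H)$, with $(g_1,h_1)\sim(g_2,h_2)$ iff either $g_1=g_2$ and $h_1h_2\in E(H)$, or $h_1=h_2$ and $g_1g_2\in E(G)$. *)

From mathcomp Require Import all_boot.
Set Implicit Arguments. Unset Strict Implicit. Unset Printing Implicit Defensive.

(* A simple graph on a finite vertex type T is a symmetric irreflexive relation. *)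

Definition complete_rel (n : nat) : rel 'I_n := fun x y => x != y.
Arguments complete_rel n : clear implicits.

Definition cart_rel (T U : finType) (eG : rel T) (eH : rel U) : rel (T * U) :=
  fun p q => ((p.1 == q.1) && eH p.2 q.2) || ((p.2 == q.2) && eG p.1 q.1).

Definition nbhd (T : finType) (e : rel T) (x : T) : {set T} := [set y | e x y].

Definition is_kTDS (T : finType) (e : rel T) (k : nat) (S : {set T}) : bool :=
  [forall x, k <= #|nbhd e x :&: S|].

Definition is_minimal_kTDS (T : finType) (e : rel T) (k : nat) (S : {set T}) : bool :=
  is_kTDS e k S && [forall S' : {set T}, (S' \proper S) ==> ~~ is_kTDS e k S'].

Definition upper_ktuple_tdom (T : finType) (e : rel T) (k : nat) : nat :=
  \max_(S : {set T} | is_minimal_kTDS e k S) #|S|.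

From mathcomp Require Import all_boot zify.
Set Implicit Arguments. Unset Strict Implicit. Unset Printing Implicit Defensive.

(* Let M be the complement of a minimal kTDS S of K_{k+1} □ K_{k+1} with
   |S| > k(k+1), so |M| <= k.  Minimality makes every v in S adjacent to some
   x with exactly k neighbours in S; since x has degree 2k, its k neighbours
   outside S exhaust M.  Such an x is not in M (it is not its own neighbour),
   so applying the same to x gives a neighbour y of x with M inside the
   common neighbourhood of the adjacent vertices x and y, a line of k - 1
   vertices, although |M| = k.  The bound is attained by all vertices off
   one column. *)

Lemma minimal_kTDS_tight (T : finType) (e : rel T) k (S : {set T}) v :
  is_minimal_kTDS e k S -> v \in S ->
  exists2 x, v \in nbhd e x & #|nbhd e x :&: S| = k.
Proof.
case/andP=> /forallP tdsS /forallP minS vS.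
have /forallPn [x] := implyP (minS (S :\ v)) (properD1 vS).
rewrite -ltnNge setIDA => lt_k.
move: (tdsS x) (cardsD1 v (nbhd e x :&: S)); rewrite inE vS andbT.
by case: (boolP (v \in nbhd e x)) => vN /= ge_k card_eq; [exists x | ]; lia.
Qed.

Lemma regular_minimal_kTDS_compl (T : finType) (e : rel T) k d (S : {set T}) v :
  (forall x, #|nbhd e x| = d) -> is_minimal_kTDS e k S ->
  #|~: S| <= d - k -> v \in S ->
  exists x, [/\ v \in nbhd e x, ~: S \subset nbhd e x & #|~: S| = d - k].
Proof.
move=> regular minS le_M vS; have [x vN tight] := minimal_kTDS_tight minS vS.
have card_out : #|nbhd e x :\: S| = d - k.
  by have := cardsID S (nbhd e x); rewrite regular tight; lia.
have out_eq : nbhd e x :\: S = ~: S.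
  by apply/eqP; rewrite eqEcard card_out le_M setDE subsetIr.
by exists x; rewrite -out_eq subsetDl card_out.
Qed.

Notation rook n := (cart_rel (complete_rel n) (complete_rel n)).

Section Rook.

Variable n : nat.

Lemma in_rook_nbhd (p q : 'I_n * 'I_n) : (q \in nbhd (rook n) p) =
  ((p.1 == q.1) && (p.2 != q.2)) || ((p.2 == q.2) && (p.1 != q.1)).
Proof. by rewrite inE. Qed.

Lemma rook_nbhd (p : 'I_n * 'I_n) :
  nbhd (rook n) p = setX [set p.1] [set~ p.2] :|: setX [set~ p.1] [set p.2].
Proof.
apply/setP => q; rewrite in_rook_nbhd !inE ![q.1 == _]eq_sym ![q.2 == _]eq_sym.
by case: (p.1 == q.1); case: (p.2 == q.2).
Qed.

Lemma card_rook_nbhd (p : 'I_n * 'I_n) : #|nbhd (rook n) p| = n.-1 + n.-1.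
Proof.
rewrite rook_nbhd cardsU !cardsX !cards1 !cardsC1 card_ord mul1n muln1.
suff -> : setX [set p.1] [set~ p.2] :&: setX [set~ p.1] [set p.2] = set0.
  by rewrite cards0 subn0.
by apply/setP => q; rewrite !inE; case: (q.1 == p.1); rewrite ?andbF.
Qed.

Lemma card_rook_common_nbhd (p q : 'I_n * 'I_n) : q \in nbhd (rook n) p ->
  #|nbhd (rook n) p :&: nbhd (rook n) q| <= n - 2.
Proof.
case: p q => [a b] [c d]; rewrite in_rook_nbhd /= => /orP[] /andP[/eqP <- ne].
- have sub : nbhd (rook n) (a, b) :&: nbhd (rook n) (a, d)
             \subset setX [set a] (~: [set b; d]).
    apply/subsetP => -[x y].
    rewrite in_setI !in_rook_nbhd !inE /= ![_ == x]eq_sym ![_ == y]eq_sym.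
    case: (x =P a) => [_|_] /=; first by rewrite !andbF !orbF negb_or.
    by case: (y =P b) => [->|_]; rewrite ?(negbTE ne) /= ?andbF.
  apply: leq_trans (subset_leq_card sub) _.
  by rewrite cardsX cards1 mul1n cardsCs setCK cards2 ne card_ord.
- have sub : nbhd (rook n) (a, b) :&: nbhd (rook n) (c, b)
             \subset setX (~: [set a; c]) [set b].
    apply/subsetP => -[x y].
    rewrite in_setI !in_rook_nbhd !inE /= ![_ == x]eq_sym ![_ == y]eq_sym.
    case: (y =P b) => [_|_] /=; first by rewrite !andbF /= negb_or andbT.
    by case: (x =P a) => [->|_]; rewrite ?(negbTE ne) /= ?andbF.
  apply: leq_trans (subset_leq_card sub) _.
  by rewrite cardsX cards1 muln1 cardsCs setCK cards2 ne card_ord.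
Qed.

Definition rook_off_column (c : 'I_n) : {set 'I_n * 'I_n} := [set p | p.2 != c].

Lemma card_rook_off_column (c : 'I_n) : #|rook_off_column c| = n * n.-1.
Proof.
have -> : rook_off_column c = setX setT [set~ c] by apply/setP => p; rewrite !inE.
by rewrite cardsX cardsT cardsC1 card_ord.
Qed.

Lemma rook_nbhd_on_column (a c : 'I_n) :
  nbhd (rook n) (a, c) :&: rook_off_column c = setX [set a] [set~ c].
Proof.
apply/setP => -[x y].
rewrite in_setI in_rook_nbhd !inE /= [x == a]eq_sym [y == c]eq_sym.
by case: (c == y); rewrite /= ?andbF ?andbT ?orbF.
Qed.

Lemma rook_off_column_kTDS (c : 'I_n) : is_kTDS (rook n) n.-1 (rook_off_column c).
Proof.
apply/forallP => -[a b]; have [->|ne_bc] := eqVneq b c.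
  by rewrite rook_nbhd_on_column cardsX cards1 cardsC1 card_ord mul1n.
have sub : setX [set~ a] [set b] \subset nbhd (rook n) (a, b) :&: rook_off_column c.
  apply/subsetP => -[x y]; rewrite in_setI in_rook_nbhd !inE /=.
  by case/andP=> ne_xa /eqP ->; rewrite eqxx eq_sym ne_xa ne_bc orbT.
by apply: leq_trans (subset_leq_card sub); rewrite cardsX cards1 cardsC1 card_ord muln1.
Qed.

Lemma rook_off_column_minimal (c : 'I_n) :
  is_minimal_kTDS (rook n) n.-1 (rook_off_column c).
Proof.
rewrite /is_minimal_kTDS rook_off_column_kTDS; apply/forallP => S'.
apply/implyP => /properP[sub_S' [[a b] abS abS']]; apply/forallPn; exists (a, c).
have : nbhd (rook n) (a, c) :&: S' \proper nbhd (rook n) (a, c) :&: rook_off_column c.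
  apply/properP; split; first exact: setIS.
  exists (a, b); last by rewrite inE (negbTE abS') andbF.
  move: abS; rewrite inE /= => ne_bc.
  by rewrite in_setI in_rook_nbhd inE /= eqxx [c == b]eq_sym ne_bc.
move/proper_card; rewrite rook_nbhd_on_column cardsX cards1 cardsC1 card_ord.
by rewrite mul1n ltnNge.
Qed.

End Rook.

Lemma rook_minimal_kTDS_card k (S : {set 'I_k.+1 * 'I_k.+1}) :
  0 < k -> is_minimal_kTDS (rook k.+1) k S -> #|S| <= k * k.+1.
Proof.
move=> k_gt0 minS; rewrite leqNgt; apply/negP => ltS.
have le_M : #|~: S| <= k.+1.-1 + k.+1.-1 - k.
  by have := cardsC S; rewrite card_prod card_ord mulSn; lia.
have [v vS] : exists v, v \in S by apply/card_gt0P; lia.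
have compl := regular_minimal_kTDS_compl (@card_rook_nbhd k.+1) minS le_M.
have [x [_ Mx card_M]] := compl v vS.
have xS : x \in S.
  by apply: contraT; rewrite -in_setC => /(subsetP Mx); rewrite in_rook_nbhd !eqxx.
have [y [xy My _]] := compl x xS.
have M_common : ~: S \subset nbhd (rook k.+1) y :&: nbhd (rook k.+1) x.
  by rewrite subsetI My.
have := leq_trans (subset_leq_card M_common) (card_rook_common_nbhd xy).
by move: card_M => /= ->; lia.
Qed.

Lemma upper_ktuple_tdom_eq (T : finType) (e : rel T) k m :
  (forall S, is_minimal_kTDS e k S -> #|S| <= m) ->
  (exists2 S, is_minimal_kTDS e k S & #|S| = m) -> upper_ktuple_tdom e k = m.
Proof.
move=> le_m [S minS card_S]; apply/eqP; rewrite eqn_leq; apply/andP; split.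
  by apply/bigmax_leqP => S'; apply: le_m.
by rewrite -card_S; apply: leq_bigmax_cond.
Qed.

Theorem mainTheorem9 (k : nat) (hk : 2 <= k) :
  upper_ktuple_tdom (cart_rel (complete_rel k.+1) (complete_rel k.+1)) k
  = k * k.+1.
Proof.
apply: upper_ktuple_tdom_eq => [S|]; first exact: rook_minimal_kTDS_card (ltnW hk).
exists (rook_off_column ord0); first exact: rook_off_column_minimal.
by rewrite card_rook_off_column mulnC.
Qed.
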